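(* Let $X_1,\dots,X_n$ be (possibly dependent) identically distributed component lifetimes with common distribution that of $X$, and let $\tau_1(\mathbf X)$ and $\tau_2(\mathbf X)$ be lifetimes of two coherent systems built on such components, with domination functions $h_1$ and $h_2$, i.e. $\bar F_{\tau_i(\mathbf X)}(x)=h_i(\bar F_X(x))$, $i=1,2$. Let $R_i(p)=(1-p)h_i'(p)/(1-h_i(p))$, $p\in(0,1)$. Then $\tau_1(\mathbf X)\underset{b}{\prec}\tau_2(\mathbf X)$ (resp. $\tau_1(\mathbf X)\underset{b}{\succ}\tau_2(\mathbf X)$) if and only if $R_1(p)/R_2(p)$ is increasing (resp. decreasing) in $p\in(0,1)$.
   Context: All random variables are non-negative and absolutely continuous with support $[0,\infty)$. For a random variable $W$: density $f_W$, cdf $F_W$, survival $\bar F_W=1-F_W$, reversed hazard rate $\tilde r_W=f_W/F_W$. $U\underset{b}{\prec}V$ means $\tilde r_U(x)/\tilde r_V(x)$ is decreasing in $x\ge0$; $U\underset{b}{\succ}V$ means $V\underset{b}{\prec}U$. The domination function $h:[0,1]\to[0,1]$ of a coherent system with identically distributed (possibly dependent) components is the function, depending on structure and survival copula, with system reliability $h(\bar F_X(x))$; it is increasing, continuous, $h(0)=0$, $h(1)=1$, assumed differentiable. ''Increasing'' means non-decreasing, ''decreasing'' means non-increasing. *)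

From HB Require Import structures.
From mathcomp Require Import all_boot all_order all_algebra.
From mathcomp Require Import all_classical all_reals all_analysis.
Set Implicit Arguments. Unset Strict Implicit. Unset Printing Implicit Defensive.
Import Order.TTheory GRing.Theory Num.Theory.
Import numFieldNormedType.Exports.
Local Open Scope classical_set_scope.
Local Open Scope ring_scope.

Section Defs.
Variable R : realType.

Definition lifetime_cdf (F f : R -> R) : Prop :=
  [/\ (forall x : R, x <= 0 -> F x = 0),
      {for 0, continuous F},
      F x @[x --> +oo] --> (1 : R) &
      (forall x : R, 0 < x -> is_derive x 1 F (f x) /\ 0 < f x)].

Definition rev_hazard (F f : R -> R) (x : R) : R := f x / F x.

(* U <_b V : r~_U(x) / r~_V(x) is decreasing (non-increasing) in x
   (on x > 0, where the reversed hazard rates are defined). *)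
Definition b_prec (FU fU FV fV : R -> R) : Prop :=
  forall x y : R, 0 < x -> x <= y ->
    rev_hazard FU fU y / rev_hazard FV fV y
      <= rev_hazard FU fU x / rev_hazard FV fV x.

Definition domination_fun (h : R -> R) : Prop :=
  [/\ (forall p q : R, 0 <= p -> p <= q -> q <= 1 -> h p <= h q),
      {within `[0, 1], continuous h},
      h 0 = 0, h 1 = 1 &
      (forall p : R, 0 < p < 1 -> derivable h p 1)].

Definition Rfun (h : R -> R) (p : R) : R := (1 - p) * derive1 h p / (1 - h p).

Definition incr_on01 (g : R -> R) : Prop :=
  forall p q : R, 0 < p -> p <= q -> q < 1 -> g p <= g q.
Definition decr_on01 (g : R -> R) : Prop :=
  forall p q : R, 0 < p -> p <= q -> q < 1 -> g q <= g p.

End Defs.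

From HB Require Import structures.
From mathcomp Require Import all_boot all_order all_algebra.
From mathcomp Require Import all_classical all_reals all_analysis.
From mathcomp Require Import ring lra.
Import Order.TTheory GRing.Theory Num.Theory.
Import numFieldNormedType.Exports.
Local Open Scope ring_scope.

(* Differentiating 1 - G = h (1 - F) gives g = h'(1 - F) f, hence
   g / G = (f / F) * R_h(1 - F): the reversed hazard rate of a system is that
   of a component times R_h evaluated at the component survival.  The factor
   f / F cancels in the ratio of two systems, and since the survival function
   1 - F is a decreasing bijection from (0, oo) onto (0, 1), monotonicity in x
   of the ratio is reversed monotonicity in p of R_h1 / R_h2. *)

Section Lifetimes.
Set Implicit Arguments.
Unset Strict Implicit.
Variable R : realType.

Section LifetimeCdf.
Variables F f : R -> R.
Hypothesis hF : lifetime_cdf F f.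

Lemma lifetime_cdf_continuous x : 0 <= x -> {for x, continuous F}.
Proof.
case: hF => _ cont0 _ hd; rewrite le_eqVlt => /orP[/eqP <- //|x_gt0].
apply: differentiable_continuous; apply/derivable1_diffP.
by have [+ _] := hd x x_gt0 => /(@ex_derive _ _ _ _ _ _ _).
Qed.

Lemma lifetime_cdf_within a b : 0 <= a -> {within `[a, b], continuous F}%classic.
Proof.
move=> a_ge0; apply: continuous_in_subspaceT => x.
rewrite inE /= in_itv /= => /andP[ax _].
exact: lifetime_cdf_continuous (le_trans a_ge0 ax).
Qed.

Lemma lifetime_cdf_ltr a b : 0 <= a -> a < b -> F a < F b.
Proof.
move=> a_ge0 ab; case: hF => _ _ _ hd.
have dF x : x \in `]a, b[ -> is_derive x 1 F (f x).
  by rewrite in_itv /= => /andP[ax _]; exact: (hd x (le_lt_trans a_ge0 ax)).1.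
rewrite -subr_gt0; have [c] := MVT ab dF (lifetime_cdf_within a_ge0).
rewrite in_itv /= => /andP[ac _] ->.
by rewrite mulr_gt0 ?subr_gt0 // (hd c (le_lt_trans a_ge0 ac)).2.
Qed.

Lemma lifetime_cdf_gt0 x : 0 < x -> 0 < F x.
Proof.
move=> x_gt0; have := lifetime_cdf_ltr (lexx 0) x_gt0.
by case: hF => -> // _ _ _; rewrite lexx.
Qed.

Lemma lifetime_cdf_lt1 x : 0 < x -> F x < 1.
Proof.
move=> x_gt0; have x_lt_x1 : x < x + 1 by rewrite ltrDl.
apply: (lt_le_trans (lifetime_cdf_ltr (ltW x_gt0) x_lt_x1)).
case: hF => _ _ Fcvg _; apply: (cvgr_to_ge Fcvg); near=> t.
apply/ltW/lifetime_cdf_ltr; first by rewrite addr_ge0 ?ltW.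
by near: t; apply: nbhs_pinfty_gt; rewrite num_real.
Unshelve. all: by end_near.
Qed.

Lemma lifetime_cdf_onto v : 0 < v < 1 -> exists2 x, 0 < x & F x = v.
Proof.
case/andP=> v_gt0 v_lt1; case: hF => F0 _ Fcvg _.
have [b [b_gt0 Fb]] : exists b, 0 < b /\ v < F b.
  have [M [_ HM]] := cvgr_gt _ Fcvg _ v_lt1.
  exists (Num.max M 0 + 1); split; last apply: HM.
    by rewrite ltr_pwDr // le_max lexx orbT.
  by rewrite ltr_pwDr // le_max lexx.
have v_between : Num.min (F 0) (F b) <= v <= Num.max (F 0) (F b).
  by rewrite F0 // ge_min le_max ltW //= (ltW Fb) orbT.
have [c] := IVT (ltW b_gt0) (lifetime_cdf_within (lexx 0)) v_between.
rewrite in_itv /= => /andP[c_ge0 _] Fc; exists c => //.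
rewrite lt_neqAle c_ge0 andbT; apply: contraTneq v_gt0 => c0.
by rewrite -Fc -c0 F0 // ltxx.
Qed.

Lemma rev_hazard_gt0 x : 0 < x -> 0 < rev_hazard F f x.
Proof.
move=> x_gt0; have [_ _ _ /(_ x x_gt0)[_ f_gt0]] := hF.
by rewrite divr_gt0 // lifetime_cdf_gt0.
Qed.

Lemma nonincreasing_comp_survival (Phi r : R -> R) :
  (forall x, 0 < x -> r x = Phi (1 - F x)) ->
  (forall x y, 0 < x -> x <= y -> r y <= r x) <-> incr_on01 Phi.
Proof.
move=> rE; split.
- move=> r_decr p q p_gt0 pq q_lt1.
  have [xp xp_gt0 Fxp] : exists2 x, 0 < x & F x = 1 - p.
    by apply: lifetime_cdf_onto; rewrite subr_gt0 (le_lt_trans pq q_lt1) /=; lra.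
  have [xq xq_gt0 Fxq] : exists2 x, 0 < x & F x = 1 - q.
    by apply: lifetime_cdf_onto; rewrite subr_gt0 q_lt1 /=; lra.
  have [xqp|xpq] := leP xq xp.
    by have := r_decr _ _ xq_gt0 xqp; rewrite !rE // Fxp Fxq !subKr.
  have := lifetime_cdf_ltr (ltW xp_gt0) xpq; rewrite Fxp Fxq; lra.
- move=> Phi_incr x y x_gt0 xy; have y_gt0 := lt_le_trans x_gt0 xy.
  have Fxy : F x <= F y.
    have [-> //|x_neq_y] := eqVneq x y.
    by apply/ltW/lifetime_cdf_ltr; rewrite ?ltW // lt_neqAle x_neq_y.
  have := lifetime_cdf_lt1 y_gt0; have := lifetime_cdf_gt0 x_gt0.
  rewrite !rE // => Fx_gt0 Fy_lt1; apply: Phi_incr; lra.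
Qed.

End LifetimeCdf.

Section DominatedLifetime.
Variables F f G g h : R -> R.
Hypotheses (hF : lifetime_cdf F f) (hG : lifetime_cdf G g) (hh : domination_fun h).
Hypothesis dom : forall x, 1 - G x = h (1 - F x).

Lemma dominated_density x : 0 < x -> g x = derive1 h (1 - F x) * f x.
Proof.
move=> x_gt0.
have p01 : 0 < 1 - F x < 1.
  have := lifetime_cdf_lt1 hF x_gt0; have := lifetime_cdf_gt0 hF x_gt0; lra.
have [_ _ _ _ /(_ _ p01)/derivableP dh] := hh.
have [_ _ _ /(_ x x_gt0)[dF _]] := hF.
have [_ _ _ /(_ x x_gt0)[dG _]] := hG.
have GE : G = cst 1 - (h \o (cst 1 - F)).
  by apply: funext => y; rewrite -(subKr 1 (G y)) dom.
have dGE := is_deriveB (is_derive_cst (1 : R) x 1)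
  (@is_derive1_comp _ h (cst 1 - F) x _ _ dh (is_deriveB (is_derive_cst (1 : R) x 1) dF)).
rewrite -(@derive_val _ _ _ _ _ _ _ dG) GE (@derive_val _ _ _ _ _ _ _ dGE) derive1E.
by rewrite !sub0r mulrN opprK.
Qed.

Lemma rev_hazard_dominated x : 0 < x ->
  rev_hazard G g x = rev_hazard F f x * Rfun h (1 - F x).
Proof.
move=> x_gt0; have Fx_neq0 := lt0r_neq0 (lifetime_cdf_gt0 hF x_gt0).
have Gx_neq0 := lt0r_neq0 (lifetime_cdf_gt0 hG x_gt0).
rewrite /rev_hazard /Rfun -dom (dominated_density x_gt0) !subKr.
by field; rewrite Fx_neq0 Gx_neq0.
Qed.

Lemma Rfun_gt0 p : 0 < p < 1 -> 0 < Rfun h p.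
Proof.
move=> p01; have [x x_gt0 Fx] : exists2 x, 0 < x & F x = 1 - p.
  by apply: (lifetime_cdf_onto hF); lra.
have := rev_hazard_gt0 hG x_gt0; rewrite rev_hazard_dominated // Fx subKr.
by rewrite pmulr_rgt0 // (rev_hazard_gt0 hF).
Qed.

End DominatedLifetime.

Lemma incr_on01_inv (Q : R -> R) :
  (forall p, 0 < p < 1 -> 0 < Q p) ->
  incr_on01 (fun p => (Q p)^-1) <-> decr_on01 Q.
Proof.
move=> Q_gt0.
have QV_le p q : 0 < p -> p <= q -> q < 1 -> ((Q p)^-1 <= (Q q)^-1) = (Q q <= Q p).
  move=> p_gt0 pq q_lt1; have Qp : 0 < Q p by apply: Q_gt0; lra.
  have Qq : 0 < Q q by apply: Q_gt0; lra.
  by rewrite lef_pV2.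
split=> Qmono p q p_gt0 pq q_lt1; first by rewrite -QV_le //; exact: Qmono.
by rewrite QV_le //; exact: Qmono.
Qed.

End Lifetimes.

Theorem proposition3p2 (R : realType)
    (F f G1 g1 G2 g2 h1 h2 : R -> R)
    (hX : lifetime_cdf F f)
    (hT1 : lifetime_cdf G1 g1) (hT2 : lifetime_cdf G2 g2)
    (hh1 : domination_fun h1) (hh2 : domination_fun h2)
    (dom1 : forall x : R, 1 - G1 x = h1 (1 - F x))
    (dom2 : forall x : R, 1 - G2 x = h2 (1 - F x)) :
  (b_prec G1 g1 G2 g2 <-> incr_on01 (fun p => Rfun h1 p / Rfun h2 p)) /\
  (b_prec G2 g2 G1 g1 <-> decr_on01 (fun p => Rfun h1 p / Rfun h2 p)).
Proof.
have ratioE x : 0 < x -> rev_hazard G1 g1 x / rev_hazard G2 g2 x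
                         = Rfun h1 (1 - F x) / Rfun h2 (1 - F x).
  move=> x_gt0; rewrite (rev_hazard_dominated hX hT1 hh1 dom1 x_gt0).
  rewrite (rev_hazard_dominated hX hT2 hh2 dom2 x_gt0) -mulf_div divff ?mul1r //.
  exact/lt0r_neq0/(rev_hazard_gt0 hX).
split; first exact: nonincreasing_comp_survival hX _ _ ratioE.
rewrite -incr_on01_inv => [|p p01]; last first.
  by rewrite divr_gt0 ?(Rfun_gt0 hX hT1 hh1 dom1) ?(Rfun_gt0 hX hT2 hh2 dom2).
by apply: (nonincreasing_comp_survival hX) => x x_gt0; rewrite -invf_div ratioE.
Qed.
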